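(* Let $P$ be a finite set of points in $\mathbb{R}^2$ in general position, and let $u,v$ be adjacent vertices of the convex hull of $P$. Then $|A(u)\cap A(v)|\le 1$.
   Context: Convex layers: $L^1$ is the set of vertices of the convex hull of $P$, $L^2$ the set of vertices of the convex hull of $P\setminus L^1$. A point $p$ is active for a hull point $u\in L^1$ if, upon deleting $u$ from $P$ and recomputing the first and second convex layers, $p$ moves to the first layer; $A(u)$ denotes the set of points active for $u$. *)

From HB Require Import structures.
From mathcomp Require Import all_boot all_order all_algebra.
From mathcomp Require Import finmap.
From mathcomp Require Import boolp.
Set Implicit Arguments. Unset Strict Implicit. Unset Printing Implicit Defensive.
Import Order.TTheory GRing.Theory Num.Theory.
Local Open Scope ring_scope.
Local Open Scope fset_scope.

Section ConvexLayers.
Variable R : realFieldType.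

Definition point := (R * R)%type.

Definition orient (a b c : point) : R :=
  (b.1 - a.1) * (c.2 - a.2) - (b.2 - a.2) * (c.1 - a.1).

Definition general_position (P : {fset point}) : Prop :=
  forall a b c, a \in P -> b \in P -> c \in P ->
    a != b -> b != c -> a != c -> orient a b c != 0.

Definition in_hull (S : {fset point}) (p : point) : Prop :=
  exists w : point -> R,
    (forall x, x \in S -> 0 <= w x) /\
    \sum_(x <- S) w x = 1 /\
    \sum_(x <- S) w x * x.1 = p.1 /\
    \sum_(x <- S) w x * x.2 = p.2.

Definition hull_vertex (P : {fset point}) (p : point) : Prop :=
  p \in P /\ ~ in_hull (P `\ p) p.

Definition L1 (P : {fset point}) : {fset point} :=
  [fset p in P | `[< hull_vertex P p >]].

Definition L2 (P : {fset point}) : {fset point} := L1 (P `\` L1 P).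

(* p is active for u: deleting u from P, p moves (from the second layer)
   to the first layer *)
Definition active (P : {fset point}) (u p : point) : Prop :=
  p \in L2 P /\ p \in L1 (P `\ u).

Definition A (P : {fset point}) (u : point) : {fset point} :=
  [fset p in P | `[< active P u p >]].

(* u and v are adjacent vertices of conv P: the segment uv is a hull edge,
   i.e. all points of P lie (weakly) on one side of the line uv *)
Definition hull_adjacent (P : {fset point}) (u v : point) : Prop :=
  u != v /\
  ((forall w, w \in P -> 0 <= orient u v w) \/
   (forall w, w \in P -> orient u v w <= 0)).

End ConvexLayers.

From HB Require Import structures.
From mathcomp Require Import all_boot all_order all_algebra.
From mathcomp Require Import finmap.
From mathcomp Require Import boolp.
From mathcomp Require Import ring lra.
Import Order.TTheory GRing.Theory Num.Theory.
Set Implicit Arguments. Unset Strict Implicit. Unset Printing Implicit Defensive.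
Local Open Scope fset_scope.
Local Open Scope ring_scope.

(* If [p] is active for [u], then [p] lies in the hull of [P \ {p}] but not
   in that of [P \ {p, u}], so every convex representation of [p] puts
   positive weight on [u].  If [p] is active for both [u] and [v], the weight
   left for [P \ {p, u, v}] is positive as well (by general position), which
   yields a point [r] of conv (P \ {p, u, v}) in the open cone at [p] pointing
   away from [u] and [v].  Every other point [q] of [P] lies in that cone, for
   otherwise [p] is a convex combination of [q], [r] and one of [u], [v].  But
   two points cannot each lie in the other's cone. *)

Lemma cardfs_le1 (K : choiceType) (X : {fset K}) :
  {in X &, forall x y, x = y} -> (#|` X| <= 1)%N.
Proof.
move=> X_eq; have [->|/fset0Pn[p pX]] := eqVneq X fset0.
  by rewrite cardfs0.
rewrite -(cardfs1 p); apply: fsubset_leq_card; apply/fsubsetP => q qX.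
by rewrite inE (X_eq q p).
Qed.

Lemma psumr_eq0_wsum (R : numDomainType) (I : eqType) (r : seq I)
    (w F : I -> R) :
  (forall i, i \in r -> 0 <= w i) -> \sum_(i <- r) w i = 0 ->
  \sum_(i <- r) w i * F i = 0.
Proof.
move=> w_ge0 /eqP; rewrite big_seq psumr_eq0 // => /allP w0.
rewrite big_seq big1 // => i ir.
by move/implyP: (w0 i ir) => /(_ ir)/eqP ->; rewrite mul0r.
Qed.

Section ConvexHull.
Variable R : realFieldType.
Implicit Types (S T : {fset point R}) (p x y z : point R).

Lemma in_hull_mem S x : x \in S -> in_hull S x.
Proof.
move=> xS; exists (fun y => if y == x then 1 else 0); split.
  by move=> y _; case: ifP.
have dirac (F : point R -> R) :
    \sum_(y <- S) (if y == x then 1 else 0) * F y = F x.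
  rewrite (big_fsetD1 _ xS) /= eqxx mul1r big1_fset ?addr0 //.
  by move=> y; rewrite in_fsetD1 => /andP[/negbTE -> _] _; rewrite mul0r.
split; first by have := dirac (fun _ => 1); under eq_bigr do rewrite mulr1.
by rewrite !dirac.
Qed.

Lemma in_hull_subset S T p : S `<=` T -> in_hull S p -> in_hull T p.
Proof.
move=> sST [w [w_ge0 [w1 [wx wy]]]].
exists (fun x => if x \in S then w x else 0); split.
  by move=> x _; case: ifP => // xS; apply: w_ge0.
have extend (F : point R -> R) :
    \sum_(x <- T) (if x \in S then w x else 0) * F x = \sum_(x <- S) w x * F x.
  rewrite -(big_fset_incl _ sST); last by move=> x _ /negbTE ->; rewrite mul0r.
  by apply: eq_big_seq => x /= ->.
split; last by rewrite !extend.
by have := extend (fun _ => 1); under eq_bigr do rewrite mulr1;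
  under [X in _ = X -> _]eq_bigr do rewrite mulr1; move=> ->.
Qed.

Lemma in_hull_weight_gt0 S y p (w : point R -> R) : y \in S ->
  ~ in_hull (S `\ y) p -> (forall x, x \in S -> 0 <= w x) ->
  \sum_(x <- S) w x = 1 -> \sum_(x <- S) w x * x.1 = p.1 ->
  \sum_(x <- S) w x * x.2 = p.2 -> 0 < w y.
Proof.
move=> yS notin w_ge0 w1 wx wy; rewrite lt0r w_ge0 // andbT.
apply/eqP => wy0; apply: notin; exists w; split.
  by move=> x; rewrite in_fsetD1 => /andP[_ /w_ge0].
by rewrite -w1 -wx -wy !(big_fsetD1 _ yS) /= wy0 !mul0r !add0r.
Qed.

Lemma in_hull_wavg S (w : point R -> R) :
  (forall x, x \in S -> 0 <= w x) -> 0 < \sum_(x <- S) w x ->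
  in_hull S ((\sum_(x <- S) w x * x.1) / \sum_(x <- S) w x,
             (\sum_(x <- S) w x * x.2) / \sum_(x <- S) w x).
Proof.
move=> w_ge0 W_gt0; exists (fun x => w x / \sum_(x <- S) w x); split.
  by move=> x /w_ge0 wx; rewrite divr_ge0 // ltW.
split; first by rewrite -mulr_suml divff // gt_eqF.
by split; under eq_bigr do rewrite mulrAC; rewrite -mulr_suml.
Qed.

Lemma in_hull_conv3 S x y z p (a b c : R) :
  in_hull S x -> in_hull S y -> in_hull S z ->
  0 <= a -> 0 <= b -> 0 <= c -> a + b + c = 1 ->
  p.1 = a * x.1 + b * y.1 + c * z.1 -> p.2 = a * x.2 + b * y.2 + c * z.2 ->
  in_hull S p.
Proof.
move=> [wx [wx0 [wx1 [wx2 wx3]]]] [wy [wy0 [wy1 [wy2 wy3]]]]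
  [wz [wz0 [wz1 [wz2 wz3]]]] a0 b0 c0 abc1 e1 e2.
exists (fun t => a * wx t + b * wy t + c * wz t); split.
  by move=> t tS; rewrite !addr_ge0 // mulr_ge0 // ?wx0 ?wy0 ?wz0.
split; first by rewrite !big_split /= -!mulr_sumr wx1 wy1 wz1 !mulr1.
by rewrite e1 e2; split; under eq_bigr do rewrite !mulrDl -!mulrA;
  rewrite !big_split /= -!mulr_sumr ?wx2 ?wy2 ?wz2 ?wx3 ?wy3 ?wz3.
Qed.

Lemma in_hull_balanced S x y z p (a b c : R) :
  in_hull S x -> in_hull S y -> in_hull S z ->
  0 <= a -> 0 <= b -> 0 <= c -> 0 < a + b + c ->
  a * (x.1 - p.1) + b * (y.1 - p.1) + c * (z.1 - p.1) = 0 ->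
  a * (x.2 - p.2) + b * (y.2 - p.2) + c * (z.2 - p.2) = 0 ->
  in_hull S p.
Proof.
move=> hx hy hz a0 b0 c0 N0 e1 e2; set N := a + b + c in N0.
have N_neq0 : N != 0 by rewrite gt_eqF.
apply: (in_hull_conv3 (a := a / N) (b := b / N) (c := c / N) hx hy hz).
- by rewrite divr_ge0 // ltW.
- by rewrite divr_ge0 // ltW.
- by rewrite divr_ge0 // ltW.
- by rewrite -!mulrDl divff.
- rewrite (_ : _ + _ + _ = (a * x.1 + b * y.1 + c * z.1) / N); last by field.
  by apply: (canRL (mulfK N_neq0)); move: e1; rewrite /N; lra.
- rewrite (_ : _ + _ + _ = (a * x.2 + b * y.2 + c * z.2) / N); last by field.
  by apply: (canRL (mulfK N_neq0)); move: e2; rewrite /N; lra.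
Qed.

End ConvexHull.

Section Cone.
Variable R : realFieldType.
Implicit Types (p q r u v : point R) (s t : R).

(* [p + s (p - u) + t (p - v)]: for [s, t > 0] this ranges over the open
   cone with apex [p] pointing away from [u] and [v]. *)
Definition cone_pt p u v s t : point R :=
  (p.1 + s * (p.1 - u.1) + t * (p.1 - v.1),
   p.2 + s * (p.2 - u.2) + t * (p.2 - v.2)).

Definition opp_cone p u v q : Prop :=
  exists s t, [/\ 0 < s, 0 < t & q = cone_pt p u v s t].

Lemma cone_ptC p u v s t : cone_pt p u v s t = cone_pt p v u t s.
Proof. by rewrite /cone_pt; congr (_, _); ring. Qed.

Lemma orient_cone_pt_l p u v s t :
  orient p (cone_pt p u v s t) v = - s * orient p u v.
Proof. by rewrite /orient /=; ring. Qed.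

Lemma orient_cone_pt_r p u v s t :
  orient p u (cone_pt p u v s t) = - t * orient p u v.
Proof. by rewrite /orient /=; ring. Qed.

Lemma cone_coords p u v q : orient p u v != 0 ->
  exists s t, q = cone_pt p u v s t.
Proof.
move=> D0.
exists (- orient p q v / orient p u v), (- orient p u q / orient p u v).
by case: q => q1 q2; rewrite /cone_pt /orient /=; congr (_, _); field.
Qed.

Lemma opp_cone_asym p q u v : orient p u v != 0 ->
  opp_cone p u v q -> ~ opp_cone q u v p.
Proof.
move=> D0 [s [t [s_gt0 t_gt0 eq]]] [s' [t' [s'_gt0 _ ep]]].
(* Computing [orient q p v] from both apexes forces [s + s' (1 + s + t) = 0]. *)
have : orient q p v = - s' * orient q u v by rewrite {1}ep orient_cone_pt_l.
move/eqP; rewrite -subr_eq0.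
rewrite (_ : _ - _ = (s + s' * (1 + s + t)) * orient p u v); last first.
  by rewrite eq /orient /=; ring.
by rewrite mulf_eq0 (negbTE D0) orbF gt_eqF //; nra.
Qed.

(* The weights [s], [- sg] and [s * ta - sg * t] balance [q], [r], [v]
   around [p]. *)
Lemma in_hull_cone_neg (S : {fset point R}) p u v q r s t sg ta :
  in_hull S q -> in_hull S r -> in_hull S v ->
  0 < s -> sg < 0 -> 0 <= s * ta - sg * t ->
  r = cone_pt p u v s t -> q = cone_pt p u v sg ta -> in_hull S p.
Proof.
move=> hq hr hv s_gt0 sg_lt0 c_ge0 er eq.
apply: (in_hull_balanced (a := s) (b := - sg) (c := s * ta - sg * t) hq hr hv).
- exact: ltW.
- by rewrite oppr_ge0 ltW.
- exact: c_ge0.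
- lra.
- by rewrite er eq /=; ring.
- by rewrite er eq /=; ring.
Qed.

Lemma cone_coord_gt0 s t sg ta : 0 < s -> 0 < t -> sg != 0 ->
  ~ (sg < 0 /\ 0 <= s * ta - sg * t) -> ~ (ta < 0 /\ 0 <= t * sg - ta * s) ->
  0 < sg.
Proof.
move=> s_gt0 t_gt0 sg0 not_u not_v; rewrite ltNge le_eqVlt negb_or sg0 /=.
apply/negP => sg_lt0; apply: not_u; split => //; rewrite leNgt; apply/negP => c.
by apply: not_v; split; nra.
Qed.

End Cone.

Definition hull_needs (R : realFieldType) (S : {fset point R})
    (u p : point R) : Prop :=
  in_hull (S `\ p) p /\ ~ in_hull (S `\ p `\ u) p.

Section TwoNeededVertices.
Variable R : realFieldType.
Variable P : {fset point R}.
Hypothesis gpP : general_position P.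
Variables p u v : point R.
Hypotheses (pP : p \in P) (uP : u \in P) (vP : v \in P).
Hypotheses (pu : p != u) (pv : p != v) (uv : u != v).
Hypotheses (needs_u : hull_needs P u p) (needs_v : hull_needs P v p).

Let S3 := P `\ p `\ u `\ v.

Lemma opposite_point_exists : exists r s t,
  [/\ in_hull S3 r, 0 < s, 0 < t & r = cone_pt p u v s t].
Proof.
move: needs_u needs_v => [[w [w_ge0 [w1 [wx wy]]]] not_u] [_ not_v].
have uS0 : u \in P `\ p by rewrite in_fsetD1 eq_sym pu uP.
have vS0 : v \in P `\ p by rewrite in_fsetD1 eq_sym pv vP.
have vS1 : v \in P `\ p `\ u by rewrite in_fsetD1 eq_sym uv vS0.
have wu_gt0 := in_hull_weight_gt0 uS0 not_u w_ge0 w1 wx wy.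
have wv_gt0 := in_hull_weight_gt0 vS0 not_v w_ge0 w1 wx wy.
have w3_ge0 x : x \in S3 -> 0 <= w x.
  by move=> /fsetD1P[_ /fsetD1P[_ /w_ge0]].
have split_uv (F : point R -> R) :
    \sum_(x <- P `\ p) F x = F u + F v + \sum_(x <- S3) F x.
  by rewrite (big_fsetD1 _ uS0) (big_fsetD1 _ vS1) /= addrA.
rewrite split_uv in w1; rewrite split_uv in wx; rewrite split_uv in wy.
set W := \sum_(x <- S3) w x in w1.
set X := \sum_(x <- S3) w x * x.1 in wx.
set Y := \sum_(x <- S3) w x * x.2 in wy.
have W_gt0 : 0 < W.
  rewrite lt0r; apply/andP; split; last by rewrite /W big_seq; apply: sumr_ge0.
  apply/eqP => W0.
  have rest0 F : \sum_(x <- S3) w x * F x = 0 by apply: psumr_eq0_wsum.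
  (* otherwise [p] would lie on the segment [u v] *)
  have := @gpP u v p uP vP pP uv; rewrite ![_ == p]eq_sym pu pv => /(_ isT isT).
  apply/negP; rewrite negbK /orient -wx -wy /X /Y !rest0.
  have -> : w v = 1 - w u by move: w1; rewrite W0; lra.
  by apply/eqP; ring.
exists (X / W, Y / W), (w u / W), (w v / W); split; first exact: in_hull_wavg.
- by rewrite divr_gt0.
- by rewrite divr_gt0.
rewrite /cone_pt /= -wx -wy; have -> : w u = 1 - w v - W by lra.
by congr (_, _); field; rewrite gt_eqF.
Qed.

Lemma opp_cone_of_needed q : q \in P -> q != p -> q != u -> q != v ->
  opp_cone p u v q.
Proof.
move=> qP qp qu qv; have pq : p != q by rewrite eq_sym.
have uq : u != q by rewrite eq_sym.
have D0 : orient p u v != 0 := @gpP p u v pP uP vP pu uv pv.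
have [r [s [t [hr s_gt0 t_gt0 er]]]] := opposite_point_exists.
have [sg [ta eq]] := cone_coords q D0.
have sg0 : sg != 0.
  have := @gpP p q v pP qP vP pq qv pv.
  by rewrite eq orient_cone_pt_l mulf_eq0 oppr_eq0 negb_or => /andP[].
have ta0 : ta != 0.
  have := @gpP p u q pP uP qP pu uq pq.
  by rewrite eq orient_cone_pt_r mulf_eq0 oppr_eq0 negb_or => /andP[].
have not_u : ~ (sg < 0 /\ 0 <= s * ta - sg * t).
  move=> [sg_lt0 c_ge0]; apply: needs_u.2.
  apply: (in_hull_cone_neg _ _ _ s_gt0 sg_lt0 c_ge0 er eq).
  - by apply: in_hull_mem; rewrite !in_fsetD1 qu qp qP.
  - by apply: in_hull_subset hr; apply: fsubD1set.
  - by apply: in_hull_mem; rewrite !in_fsetD1 eq_sym uv eq_sym pv vP.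
have not_v : ~ (ta < 0 /\ 0 <= t * sg - ta * s).
  move=> [ta_lt0 c_ge0]; apply: needs_v.2.
  rewrite cone_ptC in er; rewrite cone_ptC in eq.
  apply: (in_hull_cone_neg _ _ _ t_gt0 ta_lt0 c_ge0 er eq).
  - by apply: in_hull_mem; rewrite !in_fsetD1 qv qp qP.
  - apply: in_hull_subset hr; apply/fsubsetP => x.
    by rewrite !in_fsetD1 => /and4P[-> _ -> ->].
  - by apply: in_hull_mem; rewrite !in_fsetD1 uv eq_sym pu uP.
exists sg, ta; split => //.
- exact: (cone_coord_gt0 s_gt0 t_gt0 sg0 not_u not_v).
- exact: (cone_coord_gt0 t_gt0 s_gt0 ta0 not_v not_u).
Qed.

End TwoNeededVertices.

Section ActivePoints.
Variable R : realFieldType.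
Implicit Types (P S : {fset point R}) (p u x : point R).

Lemma mem_L1 S x : x \in L1 S -> x \in S.
Proof. by rewrite inE => /andP[]. Qed.

Lemma active_hull_needs P u p : u \in L1 P -> p \in A P u ->
  [/\ p \in P, p != u & hull_needs P u p].
Proof.
move=> uL; rewrite inE => /andP[pP /asboolP[pL2 pL1]].
have pNL1 : p \notin L1 P by move: pL2 => /mem_L1; rewrite in_fsetD => /andP[].
have pu : p != u by apply: contraNneq pNL1 => ->.
split => //; split.
  apply: contrapT => not_in; move/negP: pNL1; apply.
  by rewrite !inE; apply/andP; split; [exact: pP | apply/asboolP].
move: pL1; rewrite inE => /andP[_ /asboolP[_]].
rewrite (_ : P `\ u `\ p = P `\ p `\ u) //.
by apply/fsetP => x; rewrite !in_fsetD1 andbCA.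
Qed.

End ActivePoints.

Theorem lemma1 (R : realFieldType) (P : {fset point R}) (u v : point R) :
  general_position P ->
  u \in L1 P -> v \in L1 P ->
  hull_adjacent P u v ->
  (#|` A P u `&` A P v| <= 1)%N.
Proof.
move=> gpP uL vL [uv _]; have uP := mem_L1 uL; have vP := mem_L1 vL.
apply: cardfs_le1 => p q; rewrite !in_fsetI => /andP[pAu pAv] /andP[qAu qAv].
have [// | pq] := eqVneq p q; exfalso; have qp : q != p by rewrite eq_sym.
have [pP pu needs_pu] := active_hull_needs uL pAu.
have [_ pv needs_pv] := active_hull_needs vL pAv.
have [qP qu needs_qu] := active_hull_needs uL qAu.
have [_ qv needs_qv] := active_hull_needs vL qAv.
apply: (opp_cone_asym (gpP p u v pP uP vP pu uv pv)).
- exact: (opp_cone_of_needed gpP pP uP vP pu pv uv needs_pu needs_pv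
           qP qp qu qv).
- exact: (opp_cone_of_needed gpP qP uP vP qu qv uv needs_qu needs_qv
           pP pq pu pv).
Qed.
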